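(* Let $S_1$ and $S_2$ be two finite collections of nonvertical line segments in the plane with $|S_1\cup S_2|=n$, such that no two segments of $S_1$ intersect (segments of $S_2$ may intersect each other). Then the number of intersection points between a segment of $S_1$ and a segment of $S_2$ that lie on an envelope (lower or upper) of $S_1$ and also on an envelope (lower or upper) of $S_2$ is $O(n)$.
   Context: For a finite collection $S$ of nonvertical segments (viewed as graphs of partial functions $\mathbb R\to\mathbb R$), the lower envelope is the pointwise minimum of these graphs (the parts visible from $y=-\infty$), and the upper envelope is the pointwise maximum (the parts visible from $y=+\infty$). *)

From mathcomp Require Import all_boot all_order all_algebra.
From mathcomp Require Import reals.
Set Implicit Arguments. Unset Strict Implicit. Unset Printing Implicit Defensive.
Import Order.TTheory GRing.Theory Num.Theory.
Local Open Scope ring_scope.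

Section Segments.
Variable R : realType.

Definition point := (R * R)%type.

Definition seg := (point * point)%type.

Definition sx1 (s : seg) : R := s.1.1.
Definition sy1 (s : seg) : R := s.1.2.
Definition sx2 (s : seg) : R := s.2.1.
Definition sy2 (s : seg) : R := s.2.2.

(* Nonvertical segment, with endpoints listed from left to right. *)
Definition nonvertical (s : seg) : Prop := sx1 s < sx2 s.

(* The segment viewed as a partial function R -> R: domain [x1, x2] ... *)
Definition indom (s : seg) (x : R) : Prop := sx1 s <= x <= sx2 s.

Definition segval (s : seg) (x : R) : R :=
  sy1 s + (sy2 s - sy1 s) * (x - sx1 s) / (sx2 s - sx1 s).

Definition on_seg (s : seg) (p : point) : Prop :=
  indom s p.1 /\ p.2 = segval s p.1.

Definition on_lower_env (S : seq seg) (p : point) : Prop :=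
  (exists2 s, s \in S & on_seg s p) /\
  (forall s, s \in S -> indom s p.1 -> p.2 <= segval s p.1).

Definition on_upper_env (S : seq seg) (p : point) : Prop :=
  (exists2 s, s \in S & on_seg s p) /\
  (forall s, s \in S -> indom s p.1 -> segval s p.1 <= p.2).

Definition on_env (S : seq seg) (p : point) : Prop :=
  on_lower_env S p \/ on_upper_env S p.

End Segments.

(* Sort the points in question into classes by the envelopes of S1 and of S2 they
   lie on and, when their abscissa is not that of an endpoint, by the side on which
   the S2-segment t through p leaves the S1-segment a through p towards the
   S2-envelope (a and t meet only once, so their slopes differ).  Between two
   consecutive endpoint abscissae the segments of S1 keep their vertical order, so
   an envelope of S1 is carried by a single segment a; once t has passed beyond a,
   no point of a lies on that envelope of S2 before the next endpoint abscissa.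
   Hence any two points of a class are separated by an endpoint abscissa, and each
   of the 12 classes has at most 2n + 1 points. *)

From mathcomp Require Import all_boot all_order all_algebra.
From mathcomp Require Import reals boolp ring lra zify.
From mathcomp Require classical_sets.
Set Implicit Arguments. Unset Strict Implicit.
Import Order.TTheory GRing.Theory Num.Theory.
Local Open Scope ring_scope.

Lemma size_flatten_map_enum_le (T : finType) (U : Type) (f : T -> seq U) k :
  (forall c, size (f c) <= k)%N -> (size (flatten [seq f c | c <- enum T]) <= #|T| * k)%N.
Proof.
move=> size_f; rewrite size_flatten sumnE /shape big_map big_map big_enum /=.
by rewrite -sum_nat_const leq_sum.
Qed.

Section Rank.
Variable R : realDomainType.

Lemma ltn_count_lt (E : seq R) (x y e : R) : e \in E -> x <= e < y ->
  (count (< x) E < count (< y) E)%N.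
Proof.
move=> eE /andP[xe ey]; elim: E eE => //= h E IH; rewrite inE => /orP[/eqP<- | /IH].
  rewrite ltNge xe ey add1n ltnS; apply: sub_count => u ux /=.
  exact: lt_trans ux (le_lt_trans xe ey).
rewrite -addnS; apply: leq_add; case: ltP => //= hx.
by rewrite (lt_trans hx (le_lt_trans xe ey)).
Qed.

Lemma size_le_separated (E l : seq R) : uniq l ->
  {in l &, forall x y, x < y -> exists2 e, e \in E & x <= e < y} ->
  (size l <= (size E).+1)%N.
Proof.
move=> ul sep; pose rank x := count (< x) E.
have rank_lt : {in l &, forall x y, x < y -> (rank x < rank y)%N}.
  by move=> x y xl yl /(sep x y xl yl)[e eE] /(ltn_count_lt eE).
have rank_inj : {in l &, injective rank}.
  move=> x y xl yl eq_rank; case: (ltgtP x y) => // lt_xy.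
    by have := rank_lt x y xl yl lt_xy; rewrite eq_rank ltnn.
  by have := rank_lt y x yl xl lt_xy; rewrite eq_rank ltnn.
rewrite -(size_map rank) -(size_iota 0 (size E).+1); apply: uniq_leq_size.
  by rewrite map_inj_in_uniq.
by move=> _ /mapP[x _ ->]; rewrite mem_iota ltnS count_size.
Qed.
End Rank.

Section Segment.
Variable R : realType.

Definition slope (s : seg R) : R := (sy2 s - sy1 s) / (sx2 s - sx1 s).

Lemma segval_shift (s : seg R) (x z : R) : segval s x = segval s z + slope s * (x - z).
Proof. by rewrite /segval /slope; ring. Qed.

Lemma segval_lerp (s : seg R) (z z' lam : R) :
  segval s (z + lam * (z' - z)) = segval s z + lam * (segval s z' - segval s z).
Proof. by rewrite /segval; ring. Qed.

Lemma indom_lerp (s : seg R) (z z' lam : R) : indom s z -> indom s z' -> 0 <= lam <= 1 ->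
  indom s (z + lam * (z' - z)).
Proof. by rewrite /indom => /andP[? ?] /andP[? ?] /andP[? ?]; apply/andP; split; nra. Qed.

Lemma indom_iff_no_endpoint_between (s : seg R) (z z' : R) : z <= z' ->
  ~~ (z <= sx1 s <= z') -> ~~ (z <= sx2 s <= z') -> indom s z <-> indom s z'.
Proof.
rewrite /indom !negb_and -!ltNge => ? /orP[]? /orP[]?;
  by split => /andP[? ?]; apply/andP; split; lra.
Qed.

Definition disjoint_segs (a b : seg R) : Prop :=
  forall p : point R, ~ (on_seg a p /\ on_seg b p).

Definition meet_once (a b : seg R) : Prop := forall p q : point R,
  on_seg a p -> on_seg b p -> on_seg a q -> on_seg b q -> p = q.

Lemma segval_lt_of_disjoint (a b : seg R) (z z' : R) : disjoint_segs a b ->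
  indom a z -> indom b z -> indom a z' -> indom b z' ->
  segval a z <= segval b z -> segval a z' < segval b z'.
Proof.
move=> ab daz dbz daz' dbz' le_z; rewrite ltNge; apply/negP => le_z'.
pose d x := segval b x - segval a x.
have [d0|d_neq0] := eqVneq (d z) 0.
  apply: (ab (z, segval a z)); split; split=> //=.
  by apply/eqP; rewrite eq_sym -subr_eq0 -/(d z) d0.
(* The affine map [d] changes sign on [z, z'], so it vanishes at [z + lam (z' - z)]. *)
have d_gt0 : 0 < d z by rewrite lt_neqAle eq_sym d_neq0 subr_ge0.
have d'_le0 : d z' <= 0 by rewrite subr_le0.
pose lam := d z / (d z - d z').
have lam01 : 0 <= lam <= 1 by apply/andP; split; rewrite /lam ?divr_ge0 ?ler_pdivrMr; lra.
pose x := z + lam * (z' - z).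
have dx : d x = d z + lam * (d z' - d z) by rewrite /d /x !segval_lerp; ring.
have dx0 : d x = 0 by rewrite dx /lam; field; lra.
apply: (ab (x, segval a x)); split; split=> //=; try exact: indom_lerp.
by apply/eqP; rewrite eq_sym -subr_eq0 -/(d x) dx0.
Qed.

Lemma slope_neq_of_meet_once (a t : seg R) (p : point R) : meet_once a t ->
  on_seg a p -> on_seg t p -> p.1 != sx2 a -> p.1 != sx2 t -> slope a != slope t.
Proof.
move=> once ap tp ne_a ne_t; apply/eqP => eq_slope.
have [/andP[a1p pa2] eap] := ap; have [/andP[t1p pt2] etp] := tp.
pose x := Num.min (sx2 a) (sx2 t).
have [xa xt] : x <= sx2 a /\ x <= sx2 t by rewrite /x !ge_min !lexx orbT.
have px : p.1 < x by rewrite /x lt_min !lt_neqAle ne_a ne_t pa2 pt2.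
pose q : point R := (x, segval a x).
have aq : on_seg a q by split => //=; apply/andP; split => //; lra.
have tq : on_seg t q.
  split => /=; first by apply/andP; split => //; lra.
  by rewrite (segval_shift a x p.1) (segval_shift t x p.1) -eap -etp eq_slope.
have /(congr1 fst)/= eq_px := once p q ap tp aq tq.
by move: px; rewrite eq_px ltxx.
Qed.

Definition on_env_side (S : seq (seg R)) (b : bool) (p : point R) : Prop :=
  if b then on_lower_env S p else on_upper_env S p.

Lemma on_envP (S : seq (seg R)) (p : point R) :
  on_env S p -> exists b, on_env_side S b p.
Proof. by case=> ?; [exists true | exists false]. Qed.

Lemma on_env_side_seg (S : seq (seg R)) b (p : point R) :
  on_env_side S b p -> exists2 s, s \in S & on_seg s p.
Proof. by case: b => -[]. Qed.

Lemma on_env_side_le (S : seq (seg R)) b (p : point R) s :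
  on_env_side S b p -> s \in S -> indom s p.1 ->
  if b then p.2 <= segval s p.1 else segval s p.1 <= p.2.
Proof. by case: b => -[_ le_p]; apply: le_p. Qed.

Lemma on_env_side_abscissa_inj (S : seq (seg R)) b (p q : point R) :
  on_env_side S b p -> on_env_side S b q -> p.1 = q.1 -> p = q.
Proof.
case: p q => [x y] [x' y'] hp hq /= eq_x; subst x'.
have [s sS [ds /= ey]] := on_env_side_seg hp.
have [s' sS' [ds' /= ey']] := on_env_side_seg hq.
have := on_env_side_le hp sS' ds'; have := on_env_side_le hq sS ds.
by case: b {hp hq} => /= le1 le2; congr pair; apply/eqP; rewrite eq_le; apply/andP; split; lra.
Qed.

Definition crossing_point (a t : seg R) : point R :=
  classical_sets.xget (0, 0) (fun p => on_seg a p /\ on_seg t p).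

Lemma crossing_pointP (a t : seg R) (p : point R) : on_seg a p -> on_seg t p ->
  on_seg a (crossing_point a t) /\ on_seg t (crossing_point a t).
Proof.
by move=> ap tp; apply: (@classical_sets.xgetI _ _ (fun x => on_seg a x /\ on_seg t x) p).
Qed.

Definition pairwise_disjoint (S : seq (seg R)) : Prop :=
  forall s s', s \in S -> s' \in S -> s != s' -> disjoint_segs s s'.

(* Pairwise disjoint segments keep their vertical order as long as none of them
   starts or ends, so the envelope is carried by a single segment there. *)
Lemma on_env_side_stable (S : seq (seg R)) b a (p q : point R) :
  pairwise_disjoint S -> a \in S -> on_seg a p ->
  on_env_side S b p -> on_env_side S b q ->
  {in S, forall s, indom s p.1 <-> indom s q.1} -> on_seg a q.
Proof.
move=> disjS aS [dap eap] hp hq same_dom.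
have [s sS [dsq esq]] := on_env_side_seg hq.
have [->|ne_as] := eqVneq a s; first by split.
have dsp := (same_dom s sS).2 dsq; have daq := (same_dom a aS).1 dap.
have := on_env_side_le hp sS dsp; have := on_env_side_le hq aS daq.
case: b {hp hq} => /= le_q le_p; exfalso.
- have := segval_lt_of_disjoint (disjS a s aS sS ne_as) dap dsp daq dsq.
  by rewrite -eap -esq; lra.
- have := segval_lt_of_disjoint (disjS s a sS aS _) dsp dap dsq daq.
  by rewrite eq_sym -eap -esq => /(_ ne_as); lra.
Qed.

(* To the side [bD] of a crossing point of [a] and [t] (to the right if [bD]),
   [t] passes beyond [a] towards the [bH]-envelope (below [a] if [bH]). *)
Definition outward (bH bD : bool) (a t : seg R) : bool :=
  if bH == bD then slope t < slope a else slope a < slope t.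

Lemma outward_exists bH (a t : seg R) : slope a != slope t -> exists bD, outward bH bD a t.
Proof.
rewrite /outward; case: (ltgtP (slope t) (slope a)) => // _ _.
  by exists bH; rewrite eqxx.
by exists (~~ bH); case: bH.
Qed.

Lemma outward_beyond bH bD (a t : seg R) (z z' : R) : outward bH bD a t ->
  segval a z = segval t z -> (if bD then z < z' else z' < z) ->
  if bH then segval t z' < segval a z' else segval a z' < segval t z'.
Proof.
rewrite /outward (segval_shift t z' z) (segval_shift a z' z) => + ->.
by case: bH; case: bD => /= ? ?; nra.
Qed.

Lemma no_common_env_point_past_outward_crossing (S1 S2 : seq (seg R)) bF bH bD
    (a t : seg R) (p q : point R) :
  pairwise_disjoint S1 -> a \in S1 -> t \in S2 -> on_seg a p -> on_seg t p ->
  on_env_side S1 bF p -> outward bH bD a t ->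
  on_env_side S1 bF q -> on_env_side S2 bH q -> (if bD then p.1 < q.1 else q.1 < p.1) ->
  {in S1 ++ S2, forall s, indom s p.1 <-> indom s q.1} -> False.
Proof.
move=> disj aS tS ap [dtp etp] hp out hq1 hq2 side same_dom.
have [_ eaq] : on_seg a q.
  apply: on_env_side_stable disj aS ap hp hq1 _ => s sS.
  by apply: same_dom; rewrite mem_cat sS.
have dtq : indom t q.1 by apply/(same_dom t _).1; rewrite // mem_cat tS orbT.
have le_q := on_env_side_le hq2 tS dtq.
have beyond := outward_beyond out (etrans (esym ap.2) etp) side.
by case: bH {out hq2} le_q beyond => /=; lra.
Qed.

End Segment.

Section Crossings.
Variables (R : realType) (S1 S2 : seq (seg R)).
Hypothesis S1_disjoint : pairwise_disjoint S1.
Hypothesis S1S2_meet_once : forall a t : seg R, a \in S1 -> t \in S2 -> meet_once a t.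

Definition endpoint_abscissae : seq R :=
  [seq sx1 s | s <- undup (S1 ++ S2)] ++ [seq sx2 s | s <- undup (S1 ++ S2)].
Local Notation E := endpoint_abscissae.

Lemma size_endpoint_abscissae : size E = (2 * size (undup (S1 ++ S2)))%N.
Proof. by rewrite size_cat !size_map mul2n addnn. Qed.

Lemma endpoint_abscissaeP s : s \in S1 ++ S2 -> sx1 s \in E /\ sx2 s \in E.
Proof. by rewrite -mem_undup => sS; rewrite !mem_cat !map_f ?orbT. Qed.

Definition crossing_class (c : bool * bool * option bool) (p : point R) : Prop :=
  let: (bF, bH, d) := c in
  [/\ on_env_side S1 bF p, on_env_side S2 bH p &
    if d is Some bD then p.1 \notin E /\
      exists a t : seg R, [/\ a \in S1, t \in S2, on_seg a p, on_seg t p & outward bH bD a t]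
    else p.1 \in E].

Lemma crossing_class_inj c (p q : point R) :
  crossing_class c p -> crossing_class c q -> p.1 = q.1 -> p = q.
Proof.
by case: c => [[bF bH] d] /= [hp _ _] [hq _ _]; apply: on_env_side_abscissa_inj hp hq.
Qed.

Lemma crossing_class_separated c (p q : point R) :
  crossing_class c p -> crossing_class c q -> p.1 < q.1 -> exists2 e, e \in E & p.1 <= e < q.1.
Proof.
case: c => [[bF bH] [bD|]] [hp1 hp2 hp] [hq1 hq2 hq] lt_pq; last by exists p.1; rewrite ?lexx.
case: hp hq => pE [a [t [aS tS ap tp out]]] [qE [a' [t' [aS' tS' aq tq out']]]].
have [/hasP[e eE /andP[pe eq]] | /hasPn no_e] := boolP (has (fun e => p.1 <= e <= q.1) E).
  exists e; rewrite // pe lt_neqAle eq andbT.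
  by apply/eqP => eq_e; move: qE; rewrite -eq_e eE.
have same_dom : {in S1 ++ S2, forall s, indom s p.1 <-> indom s q.1}.
  move=> s /endpoint_abscissaeP[e1 e2].
  exact: indom_iff_no_endpoint_between (ltW lt_pq) (no_e _ e1) (no_e _ e2).
case: bD out out' => out out'.
  by case: (no_common_env_point_past_outward_crossing S1_disjoint aS tS ap tp hp1 out
    hq1 hq2 lt_pq same_dom).
have same_dom' : {in S1 ++ S2, forall s, indom s q.1 <-> indom s p.1}.
  by move=> s sS; apply: iff_sym; apply: same_dom.
by case: (no_common_env_point_past_outward_crossing S1_disjoint aS' tS' aq tq hq1 out'
  hp1 hp2 lt_pq same_dom').
Qed.

Definition crossing_points : seq (point R) := [seq crossing_point a t | a <- S1, t <- S2].

Lemma mem_crossing_points (a t : seg R) (p : point R) :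
  a \in S1 -> t \in S2 -> on_seg a p -> on_seg t p -> p \in crossing_points.
Proof.
move=> aS tS ap tp; apply/allpairsP; exists (a, t); split => //=.
have [ax tx] := crossing_pointP ap tp.
exact: (S1S2_meet_once aS tS ap tp ax tx).
Qed.

Definition class_points c : seq (point R) :=
  undup [seq p <- crossing_points | `[< crossing_class c p >]].

Lemma size_class_points c : (size (class_points c) <= (size E).+1)%N.
Proof.
have cls p : p \in class_points c -> crossing_class c p.
  by rewrite mem_undup mem_filter => /andP[/asboolP].
rewrite -(size_map fst); apply: size_le_separated.
  rewrite map_inj_in_uniq ?undup_uniq // => p q /cls hp /cls hq.
  exact: crossing_class_inj hp hq.
by move=> x y /mapP[p /cls hp ->] /mapP[q /cls hq ->]; apply: crossing_class_separated hp hq.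
Qed.

Definition env_crossings : seq (point R) :=
  flatten [seq class_points c | c <- enum {: bool * bool * option bool}].

Lemma size_env_crossings : (size env_crossings <= 24 * size (undup (S1 ++ S2)) + 24)%N.
Proof.
apply: leq_trans (size_flatten_map_enum_le size_class_points) _.
by rewrite !card_prod card_option !card_bool size_endpoint_abscissae; lia.
Qed.

Lemma crossing_classP (a t : seg R) (p : point R) :
  a \in S1 -> t \in S2 -> on_seg a p -> on_seg t p ->
  on_env S1 p -> on_env S2 p -> exists c, crossing_class c p.
Proof.
move=> aS tS ap tp /on_envP[bF hF] /on_envP[bH hH].
have [pE|pE] := boolP (p.1 \in E); first by exists (bF, bH, None).
have [_ a2] : sx1 a \in E /\ sx2 a \in E by apply: endpoint_abscissaeP; rewrite mem_cat aS.
have [_ t2] : sx1 t \in E /\ sx2 t \in E.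
  by apply: endpoint_abscissaeP; rewrite mem_cat tS orbT.
have [ne_a ne_t] : p.1 != sx2 a /\ p.1 != sx2 t by split; apply: contraNneq pE => ->.
have := slope_neq_of_meet_once (S1S2_meet_once aS tS) ap tp ne_a ne_t.
move=> /(outward_exists bH)[bD out].
by exists (bF, bH, Some bD); split => //; split => //; exists a, t.
Qed.

Lemma mem_env_crossings (a t : seg R) (p : point R) :
  a \in S1 -> t \in S2 -> on_seg a p -> on_seg t p ->
  on_env S1 p -> on_env S2 p -> p \in env_crossings.
Proof.
move=> aS tS ap tp envS1 envS2; have [c hc] := crossing_classP aS tS ap tp envS1 envS2.
apply/flatten_mapP; exists c; first by rewrite mem_enum.
by rewrite mem_undup mem_filter (mem_crossing_points aS tS ap tp) andbT; apply/asboolP.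
Qed.

End Crossings.

Theorem lemma2 :
  exists c : nat,
  forall (R : realType) (S1 S2 : seq (seg R)),
    (forall s, s \in S1 ++ S2 -> nonvertical s) ->
    (* no two (distinct) segments of S1 intersect *)
    (forall s s', s \in S1 -> s' \in S1 -> s != s' ->
       forall p : point R, ~ (on_seg s p /\ on_seg s' p)) ->
    (* a segment of S1 and a segment of S2 meet in at most one point *)
    (forall s1 s2, s1 \in S1 -> s2 \in S2 ->
       forall p q : point R, on_seg s1 p -> on_seg s2 p ->
         on_seg s1 q -> on_seg s2 q -> p = q) ->
    exists L : seq (point R),
      (size L <= c * size (undup (S1 ++ S2)) + c)%N /\
      forall p : point R,
        (exists2 s1, s1 \in S1 & exists2 s2, s2 \in S2 &
           on_seg s1 p /\ on_seg s2 p) ->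
        on_env S1 p -> on_env S2 p -> p \in L.
Proof.
exists 24%N => R S1 S2 _ S1_disjoint S1S2_meet_once.
exists (env_crossings S1 S2); split; first exact: size_env_crossings.
move=> p [a aS [t tS [ap tp]]].
exact: (mem_env_crossings S1S2_meet_once aS tS ap tp).
Qed.
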